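(* Let $d\ge 1$ and $n$ be integers with $n\le d+1$, let $r>0$, let $B\subset\mathbb{R}^d$ be the closed Euclidean ball of radius $r$ centered at the origin, and let $S=\partial B$ be its boundary sphere. Consider the maximization of $E(\mathrm{MST}(X))$ over all point sets $X\subset B$ of cardinality $n$. The maximum is attained when the points of $X$ lie on $S$, at the vertices of a regular $(n-1)$-simplex that has $S$ as its smallest circumscribing sphere.
   Context: For a finite set $Z\subset\mathbb{R}^d$, a spanning tree of $Z$ is a connected acyclic undirected graph with vertex set $Z$; its length is $E(G)=\sum_{(z,z')\text{ edge of }G}\|z-z'\|_2$. $E(\mathrm{MST}(Z))$ denotes the minimum of $E(G)$ over all spanning trees $G$ of $Z$ (the length of a minimum spanning tree). A $k$-simplex is the convex hull of $k+1$ affinely independent points; it is regular if all pairwise distances between its vertices are equal. *)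

From HB Require Import structures.
From mathcomp Require Import all_boot all_order all_algebra.
From mathcomp Require Import boolp reals constructive_ereal.
Set Implicit Arguments.
Unset Strict Implicit.
Unset Printing Implicit Defensive.
Import Order.TTheory GRing.Theory Num.Theory.
Local Open Scope ring_scope.

Definition enorm (R : realType) (d : nat) (v : 'rV[R]_d) : R :=
  Num.sqrt (\sum_(i < d) (v ord0 i) ^+ 2).

Definition edist (R : realType) (d : nat) (x y : 'rV[R]_d) : R := enorm (x - y).

(* A graph on the vertex set 'I_n (the indices of the points) is given by a set
   of ordered pairs; we require it to be symmetric and irreflexive (simple
   undirected graph). *)
Definition adj (n : nat) (G : {set 'I_n * 'I_n}) : rel 'I_n :=
  fun i j => (i, j) \in G.

Definition simple_graph (n : nat) (G : {set 'I_n * 'I_n}) : Prop :=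
  (forall i, ~~ adj G i i) /\ (forall i j, adj G i j = adj G j i).

Definition graph_connected (n : nat) (G : {set 'I_n * 'I_n}) : Prop :=
  forall i j, connect (adj G) i j.

Definition graph_acyclic (n : nat) (G : {set 'I_n * 'I_n}) : Prop :=
  forall s : seq 'I_n, uniq s -> (3 <= size s)%N -> ~~ cycle (adj G) s.

Definition spanning_tree (n : nat) (G : {set 'I_n * 'I_n}) : Prop :=
  simple_graph G /\ graph_connected G /\ graph_acyclic G.

(* length of a graph: each undirected edge {i,j} counted once (i < j) *)
Definition graph_length (R : realType) (d n : nat) (X : 'I_n -> 'rV[R]_d)
    (G : {set 'I_n * 'I_n}) : R :=
  \sum_(p in G | (p.1 < p.2)%N) edist (X p.1) (X p.2).

(* E(MST(X)): minimum of the length over all spanning trees, as an extended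
   real (+oo if there is no spanning tree). *)
Definition mst_length (R : realType) (d n : nat) (X : 'I_n -> 'rV[R]_d)
    : \bar R :=
  \big[Order.min/+oo%E]_(G : {set 'I_n * 'I_n} | `[< spanning_tree G >])
     (graph_length X G)%:E.

Definition affinely_independent (R : realType) (d n : nat)
    (Y : 'I_n -> 'rV[R]_d) : Prop :=
  forall c : 'I_n -> R,
    \sum_i c i = 0 -> \sum_i c i *: Y i = 0 -> forall i, c i = 0.

Definition regular_simplex (R : realType) (d n : nat)
    (Y : 'I_n -> 'rV[R]_d) : Prop :=
  affinely_independent Y /\
  (forall i j k l, i != j -> k != l -> edist (Y i) (Y j) = edist (Y k) (Y l)).

Definition smallest_circumsphere (R : realType) (d n : nat) (r : R)
    (Y : 'I_n -> 'rV[R]_d) : Prop :=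
  (forall i, enorm (Y i) = r) /\
  (forall (c : 'rV[R]_d) (rho : R), (forall i, edist (Y i) c = rho) -> r <= rho).

(* A regular simplex with n vertices and side s has circumradius rho with
   2 n rho^2 = (n - 1) s^2 about its centroid, so r <= rho gives
   2 n r^2 <= (n - 1) s^2; and a spanning tree has at least n - 1 edges, so
   every spanning tree of the simplex has length at least (n - 1) s.  For points
   X_1, ..., X_n of the ball, the star centred at X_k is a spanning tree of
   length L_k = sum_j |X_k - X_j|.  By Cauchy-Schwarz and the identity
   sum_(j,k) |X_j - X_k|^2 = 2 n sum_k |X_k|^2 - 2 |sum_k X_k|^2 <= 2 n^2 r^2,
   we get sum_k L_k^2 <= 2 n^2 (n - 1) r^2, so the shortest star has
   L_k^2 <= 2 n (n - 1) r^2 <= (n - 1)^2 s^2. *)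

From HB Require Import structures.
From mathcomp Require Import all_boot all_order all_algebra.
From mathcomp Require Import boolp reals constructive_ereal.
From mathcomp Require Import ring lra.
Import Order.TTheory GRing.Theory Num.Theory.

Set Implicit Arguments.
Unset Strict Implicit.
Unset Printing Implicit Defensive.

Lemma connect_rank_descent (T : finType) (e : rel T) (x0 : T) :
  (forall x, connect e x x0) ->
  exists (f : T -> T) (h : T -> nat),
    forall v, v != x0 -> e v (f v) && (h (f v) < h v).
Proof.
move=> conn.
pose P v k := [exists t : k.-tuple T, path e v t && (last v t == x0)].
have exP v : exists k, P v k.
  have /connectP [p pp lp] := conn v.
  by exists (size p); apply/existsP; exists (in_tuple p); rewrite /= pp -lp eqxx.
pose h v := ex_minn (exP v).
have descent v : v != x0 -> exists w, e v w && (h w < h v).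
  move=> nv; rewrite /h; case: ex_minnP => k /existsP [[[|w p] /= /eqP szt]].
    by move=> /eqP vx0; rewrite vx0 eqxx in nv.
  case/andP=> /andP [evw pp] px0 _; exists w; rewrite evw /= -szt.
  case: ex_minnP => m _ /(_ (size p)); apply; apply/existsP.
  by exists (in_tuple p); rewrite /= pp px0.
exists (fun v => odflt v [pick w | e v w && (h w < h v)]), h => v nv.
case: pickP => [w //|none] /=.
by have [w] := descent v nv; rewrite none.
Qed.

Lemma connected_edges_ge n (G : {set 'I_n * 'I_n}) :
  simple_graph G -> graph_connected G ->
  (n.-1 <= #|[set p in G | (p.1 < p.2)%N]|)%N.
Proof.
case: n G => [//|n] G [irr sym] conn.
have [f [h parentP]] := connect_rank_descent (fun x => conn x ord0).
pose edge (v : 'I_n.+1) := if (v < f v)%N then (v, f v) else (f v, v).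
have -> : n.+1.-1 = #|[set~ ord0 : 'I_n.+1]| by rewrite cardsC1 card_ord.
(* the edge to the parent determines the vertex, since ranks decrease along parents *)
rewrite -(@card_in_imset _ _ edge); last first.
  move=> v w; rewrite !inE => /parentP /andP [_ hv] /parentP /andP [_ hw]; rewrite /edge.
  case: ifP => _; case: ifP => _ [e1 e2] //.
  - by rewrite e2 in hv; rewrite -e1 in hw; have := ltn_trans hv hw; rewrite ltnn.
  - by rewrite e1 in hv; rewrite -e2 in hw; have := ltn_trans hv hw; rewrite ltnn.
apply/subset_leq_card/subsetP => p /imsetP [v + ->]; rewrite !inE => /parentP /andP [evf _].
have nvf : v != f v by apply: contraNneq (irr v) => {2}->.
rewrite /edge; case: ltngtP => [lt|gt|/val_inj eq]; rewrite /= ?inE //.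
- by rewrite lt andbT.
- by rewrite gt andbT -[_ \in G]/(adj G (f v) v) sym.
- by rewrite -eq eqxx in nvf.
Qed.

Definition star n (k : 'I_n) : {set 'I_n * 'I_n} :=
  [set p | (p.1 == k) (+) (p.2 == k)].

Lemma adj_star n (k i j : 'I_n) : adj (star k) i j = (i == k) (+) (j == k).
Proof. by rewrite /adj inE. Qed.

Lemma star_spanning_tree n (k : 'I_n) : spanning_tree (star k).
Proof.
have k_adj j : j != k -> adj (star k) k j.
  by move=> njk; rewrite adj_star eqxx (negbTE njk).
split; [split|split].
- by move=> i; rewrite adj_star addbb.
- by move=> i j; rewrite !adj_star addbC.
- have k_conn j : connect (adj (star k)) k j.
    by case: (eqVneq j k) => [->|/k_adj/connect1].
  move=> i j; case: (eqVneq i k) => [->|nik]; first exact: k_conn.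
  by apply: connect_trans (k_conn j); apply: connect1; rewrite adj_star eqxx addbT nik.
(* every edge contains k, which a simple cycle visits only once *)
- move=> [|x [|y [|z s]]] //= Hu _; rewrite !adj_star; apply/negP => /and3P [].
  case: (eqVneq y k) => [eyk|nyk]; last first.
    by rewrite !addbF => /eqP exk /eqP ezk; move: Hu; rewrite exk ezk !inE eqxx orbT.
  rewrite !addbT => nxk nzk; case: s Hu => [|w s] Hu /=.
    by rewrite adj_star (negbTE nxk) (negbTE nzk).
  rewrite adj_star (negbTE nzk) /= => /andP [/eqP ewk _].
  by move: Hu; rewrite eyk -ewk !inE eqxx !orbT andbF.
Qed.

Local Open Scope ring_scope.

Section Sums.
Variables (R : realFieldType) (I : finType).
Implicit Types (A : {pred I}) (a c : I -> R).

Lemma sum_sqrB A a (b : R) :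
  \sum_(i in A) (a i - b) ^+ 2 =
  \sum_(i in A) a i ^+ 2 - 2 * b * \sum_(i in A) a i + #|A|%:R * b ^+ 2.
Proof.
rewrite (eq_bigr (fun i => a i ^+ 2 - 2 * b * a i + b ^+ 2)) => [|i _]; last by ring.
by rewrite big_split sumrB /= -mulr_sumr sumr_const [#|A|%:R * _]mulr_natl.
Qed.

Lemma sum_pairwise_sqrB A a :
  \sum_(i in A) \sum_(j in A) (a j - a i) ^+ 2 =
  2 * (#|A|%:R * \sum_(j in A) a j ^+ 2 - (\sum_(j in A) a j) ^+ 2).
Proof.
under eq_bigr do rewrite sum_sqrB.
rewrite big_split sumrB /= sumr_const -mulr_suml -!mulr_sumr -mulr_natr; ring.
Qed.

Lemma sqr_sum_le A a :
  (\sum_(i in A) a i) ^+ 2 <= #|A|%:R * \sum_(i in A) a i ^+ 2.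
Proof.
have : 0 <= \sum_(i in A) \sum_(j in A) (a j - a i) ^+ 2.
  by do 2![apply: sumr_ge0 => ? _]; apply: sqr_ge0.
rewrite sum_pairwise_sqrB pmulr_rge0 //; lra.
Qed.

Lemma sum_pairwise_sqrB_le a :
  \sum_i \sum_j (a j - a i) ^+ 2 <= 2 * #|I|%:R * \sum_i a i ^+ 2.
Proof. by rewrite sum_pairwise_sqrB -mulrA ler_wpM2l // lerBlDr lerDl sqr_ge0. Qed.

Lemma sqr_sum_weighted c a : \sum_i c i = 0 ->
  2 * (\sum_i c i * a i) ^+ 2 = - \sum_i \sum_j c i * c j * (a i - a j) ^+ 2.
Proof.
move=> c0.
have row i : \sum_j c i * c j * (a i - a j) ^+ 2 =
    c i * \sum_j c j * a j ^+ 2 - 2 * (c i * a i) * \sum_j c j * a j.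
  rewrite (eq_bigr (fun j => c i * a i ^+ 2 * c j +
      (c i * (c j * a j ^+ 2) - 2 * (c i * a i) * (c j * a j)))) => [|j _]; last by ring.
  by rewrite big_split /= -mulr_sumr c0 mulr0 add0r sumrB -!mulr_sumr.
by rewrite (eq_bigr _ (fun i _ => row i)) sumrB -!mulr_suml c0 mul0r -mulr_sumr; ring.
Qed.

Lemma exists_le_mean (i0 : I) (F : I -> R) : exists k, #|I|%:R * F k <= \sum_i F i.
Proof.
case: (arg_minP F (isT : xpredT i0)) => k _ Fk; exists k.
by rewrite mulr_natl -sumr_const; apply: ler_sum => i _; apply: Fk.
Qed.

End Sums.

Section Euclidean.
Variable R : realType.

Definition sqnorm (d : nat) (v : 'rV[R]_d) : R := \sum_i v ord0 i ^+ 2.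

Definition centroid (n d : nat) (Y : 'I_n -> 'rV[R]_d) : 'rV[R]_d :=
  n%:R^-1 *: \sum_i Y i.

Lemma sqnorm_ge0 d (v : 'rV[R]_d) : 0 <= sqnorm v.
Proof. by apply: sumr_ge0 => i _; apply: sqr_ge0. Qed.

Lemma enorm_ge0 d (v : 'rV[R]_d) : 0 <= enorm v.
Proof. exact: sqrtr_ge0. Qed.

Lemma enorm_sqr d (v : 'rV[R]_d) : enorm v ^+ 2 = sqnorm v.
Proof. by rewrite sqr_sqrtr // sqnorm_ge0. Qed.

Lemma sqnormB d (x y : 'rV[R]_d) :
  sqnorm (x - y) = \sum_i (x ord0 i - y ord0 i) ^+ 2.
Proof. by apply: eq_bigr => i _; rewrite !mxE. Qed.

Lemma sqnormZ d (a : R) (v : 'rV[R]_d) : sqnorm (a *: v) = a ^+ 2 * sqnorm v.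
Proof. by rewrite /sqnorm mulr_sumr; apply: eq_bigr => i _; rewrite mxE exprMn. Qed.

Lemma sqnormBC d (x y : 'rV[R]_d) : sqnorm (x - y) = sqnorm (y - x).
Proof. by rewrite -opprB /sqnorm; apply: eq_bigr => i _; rewrite mxE sqrrN. Qed.

Lemma edistC d (x y : 'rV[R]_d) : edist x y = edist y x.
Proof. by rewrite /edist /enorm -!/(sqnorm _) sqnormBC. Qed.

Lemma edistxx d (x : 'rV[R]_d) : edist x x = 0.
Proof. by rewrite /edist /enorm subrr big1 ?sqrtr0 // => i _; rewrite mxE expr0n. Qed.

Lemma edist_sqr d (x y : 'rV[R]_d) : edist x y ^+ 2 = sqnorm (x - y).
Proof. exact: enorm_sqr. Qed.

Lemma sqnorm0 d : sqnorm (0 : 'rV[R]_d) = 0.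
Proof. by rewrite /sqnorm big1 // => i _; rewrite mxE expr0n. Qed.

Lemma sum_sub_centroid n d (Y : 'I_n -> 'rV[R]_d) k :
  (0 < n)%N -> \sum_i (Y i - centroid Y) ord0 k = 0.
Proof.
move=> n0; under eq_bigr do rewrite !mxE summxE.
rewrite sumrB sumr_const card_ord -[X in _ - X]mulr_natl mulVKf ?subrr //.
by rewrite pnatr_eq0 -lt0n.
Qed.

Lemma sum_sqnorm_centered n d (Y : 'I_n -> 'rV[R]_d) (b : 'rV[R]_d) :
  (forall k, \sum_i Y i ord0 k = 0) ->
  \sum_i sqnorm (Y i - b) = \sum_i sqnorm (Y i) + n%:R * sqnorm b.
Proof.
move=> Y0; under eq_bigr do rewrite sqnormB.
rewrite exchange_big /= /sqnorm [\sum_(i < n) _]exchange_big mulr_sumr -big_split /=.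
by apply: eq_bigr => k _; rewrite sum_sqrB Y0 mulr0 subr0 card_ord.
Qed.

Lemma sum_pairwise_sqnorm_le n d (Y : 'I_n -> 'rV[R]_d) :
  \sum_i \sum_j sqnorm (Y j - Y i) <= 2 * n%:R * \sum_i sqnorm (Y i).
Proof.
rewrite (eq_bigr _ (fun i _ => eq_bigr _ (fun j _ => sqnormB _ _))).
under eq_bigr do rewrite exchange_big /=.
rewrite exchange_big /= /sqnorm [X in _ <= _ * X]exchange_big mulr_sumr.
by apply: ler_sum => k _; have := sum_pairwise_sqrB_le (fun i => Y i ord0 k); rewrite card_ord.
Qed.

Section Equidistant.
Variables (n d : nat) (Y : 'I_n -> 'rV[R]_d) (D : R).
Hypothesis YD : forall i j, i != j -> sqnorm (Y i - Y j) = D.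

Lemma sum_sqnorm_equidistant i : \sum_j sqnorm (Y j - Y i) = n.-1%:R * D.
Proof.
rewrite (bigD1 i) //= subrr sqnorm0 add0r (eq_bigr (fun _ => D)) => [|j ji]; last exact: YD.
by rewrite sumr_const cardC1 card_ord mulr_natl.
Qed.

(* 0 = 2 |sum_i c_i Y_i|^2 = - sum_(i,j) c_i c_j |Y_i - Y_j|^2 = D sum_i c_i^2 *)
Lemma equidistant_affinely_independent : D != 0 -> affinely_independent Y.
Proof.
move=> D0 c c0 cY.
have cY0 k : \sum_i c i * Y i ord0 k = 0.
  transitivity ((\sum_i c i *: Y i) ord0 k); last by rewrite cY mxE.
  by rewrite summxE; apply: eq_bigr => i _; rewrite mxE.
have row i : \sum_j c i * c j * sqnorm (Y i - Y j) = - D * c i ^+ 2.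
  rewrite (bigD1 i) //= subrr sqnorm0 mulr0 add0r.
  rewrite (eq_bigr (fun j => c i * D * c j)) => [|j ji]; last by rewrite YD 1?eq_sym //; ring.
  have : \sum_(j | j != i) c j = - c i.
    by apply/eqP; rewrite -addr_eq0 addrC; move: c0; rewrite (bigD1 i) // => ->.
  by rewrite -mulr_sumr => ->; ring.
have : \sum_i \sum_j c i * c j * sqnorm (Y i - Y j) = 0.
  have E i j : c i * c j * sqnorm (Y i - Y j) =
      \sum_k c i * c j * (Y i ord0 k - Y j ord0 k) ^+ 2 by rewrite sqnormB mulr_sumr.
  rewrite (eq_bigr _ (fun i _ => eq_bigr _ (fun j _ => E i j))).
  under eq_bigr do rewrite exchange_big /=.
  rewrite exchange_big big1 // => k _ /=.
  have := sqr_sum_weighted (fun i => Y i ord0 k) c0.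
  by rewrite cY0 expr0n mulr0 => /eqP; rewrite eq_sym oppr_eq0 => /eqP.
under eq_bigr do rewrite row.
rewrite -mulr_sumr => /eqP; rewrite mulf_eq0 oppr_eq0 (negbTE D0) /= => /eqP c20 i.
by apply/eqP; rewrite -sqrf_eq0; apply/eqP; apply: (psumr_eq0P _ c20) => // j _; apply: sqr_ge0.
Qed.

Lemma sqnorm_sub_centroid_equidistant i : (0 < n)%N ->
  2 * n%:R * sqnorm (Y i - centroid Y) = n.-1%:R * D.
Proof.
move=> n0; set g := centroid Y; set W := \sum_j sqnorm (Y j - g).
have E j : n%:R * sqnorm (Y j - g) = n.-1%:R * D - W.
  have := sum_sqnorm_centered (Y j - g) (fun k => sum_sub_centroid Y k n0).
  under eq_bigr do rewrite opprB addrA subrK.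
  by rewrite sum_sqnorm_equidistant -/W => ->; ring.
have nz : n%:R != 0 :> R by rewrite pnatr_eq0 -lt0n.
have : n%:R * W = n%:R * (n.-1%:R * D - W).
  by rewrite mulr_sumr (eq_bigr _ (fun j _ => E j)) sumr_const card_ord [RHS]mulr_natl.
by move/(mulfI nz) => W2; rewrite -mulrA E; lra.
Qed.

Lemma sqr_circumradius_le r : (0 < n)%N -> smallest_circumsphere r Y ->
  2 * n%:R * r ^+ 2 <= n.-1%:R * D.
Proof.
move=> n0 [Yr rmin]; pose i0 := Ordinal n0.
have nz : 2 * n%:R != 0 :> R by rewrite mulf_neq0 // pnatr_eq0 -lt0n.
have dist_g i : edist (Y i) (centroid Y) = enorm (Y i0 - centroid Y).
  congr Num.sqrt; apply: (mulfI nz).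
  by rewrite -/(sqnorm _) -/(sqnorm _) !sqnorm_sub_centroid_equidistant.
have r0 : 0 <= r by rewrite -(Yr i0) enorm_ge0.
have := rmin _ _ dist_g; have := enorm_ge0 (Y i0 - centroid Y).
rewrite -(sqnorm_sub_centroid_equidistant i0 n0) -enorm_sqr => e0 re.
by rewrite ler_wpM2l ?mulr_ge0 ?ler0n //; nra.
Qed.

End Equidistant.

Lemma smallest_circumsphere_centered n d (Y : 'I_n -> 'rV[R]_d) (r : R) :
  (0 < n)%N -> (forall k, \sum_i Y i ord0 k = 0) -> (forall i, enorm (Y i) = r) ->
  smallest_circumsphere r Y.
Proof.
move=> n0 Y0 Yr; split=> // c rho Yrho; pose i0 := Ordinal n0.
have := sum_sqnorm_centered c Y0.
under eq_bigr do rewrite -edist_sqr Yrho.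
under [X in _ = X + _]eq_bigr do rewrite -enorm_sqr Yr.
rewrite !sumr_const card_ord => E.
rewrite -ler_sqr ?nnegrE -?(Yr i0) -?(Yrho i0) ?enorm_ge0 // Yr Yrho.
by rewrite -(ler_pMn2r n0) E lerDl mulr_ge0 ?ler0n ?sqnorm_ge0.
Qed.

End Euclidean.

Section Construction.
Variable R : realType.

Lemma exists_simplex_apex_coord (m : nat) : (0 < m)%N ->
  exists t : R, m%:R * t ^+ 2 - 2 * t - 1 = 0.
Proof.
move=> m_gt0; have m0 : m%:R != 0 :> R by rewrite pnatr_eq0 -lt0n.
pose q : R := Num.sqrt m.+1%:R; exists ((1 - q) / m%:R).
have q2 : q ^+ 2 = m%:R + 1 by rewrite sqr_sqrtr ?ler0n // -addn1 natrD.
have mt : m%:R * ((1 - q) / m%:R) = 1 - q by rewrite mulrC divfK.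
apply: (mulfI m0); rewrite mulr0.
transitivity ((m%:R * ((1 - q) / m%:R)) ^+ 2 - 2 * (m%:R * ((1 - q) / m%:R)) - m%:R).
  by ring.
by rewrite mt; nra.
Qed.

(* the unit vectors e_0, ..., e_(m-1), m = n - 1, and the apex t (e_0 + ... + e_(m-1)),
   whose distance to every e_i is sqrt 2 by the choice of t *)
Lemma exists_equidistant (n d : nat) : (2 <= n)%N -> (n <= d.+1)%N ->
  exists V : 'I_n -> 'rV[R]_d, forall i j, i != j -> sqnorm (V i - V j) = 2.
Proof.
move=> n2 nd; set m := n.-1.
have nm : n = m.+1 by rewrite /m prednK // ltnW.
have md : (m <= d)%N by rewrite -ltnS -nm.
have m_gt0 : (0 < m)%N by rewrite /m ltn_predRL.
have [t t_root] := exists_simplex_apex_coord m_gt0.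
pose v (i c : nat) : R :=
  if (i < m)%N then (if c == i then 1 else 0) else (if (c < m)%N then t else 0).
have v0 i c : (m <= c)%N -> v i c = 0.
  rewrite /v => mc; case: ltnP => [im|_]; last by rewrite ltnNge mc.
  by rewrite gtn_eqF // (leq_trans im mc).
have delta_sum i : (i < m)%N -> \sum_(c < m) (if (c : nat) == i then 1 else 0) = 1 :> R.
  by move=> im; rewrite -big_mkcond (big_ord1_eq _ (fun _ => 1)) im.
pose V i : 'rV[R]_d := \row_c v i c.
have trunc i j : sqnorm (V i - V j) = \sum_(c < m) (v i c - v j c) ^+ 2.
  rewrite sqnormB [RHS](big_ord_widen _ (fun c => (v i c - v j c) ^+ 2) md) [RHS]big_mkcond /=.
  apply: eq_bigr => c _; rewrite !mxE; case: ltnP => // mc.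
  by rewrite !v0 // subrr expr0n.
have key (i j : 'I_n) : i != j -> (j < m)%N -> sqnorm (V i - V j) = 2.
  move=> nij jm; rewrite trunc; case: (ltnP i m) => im.
    rewrite (eq_bigr (fun c : 'I_m => (if (c : nat) == i then 1 else 0) +
                                      (if (c : nat) == j then 1 else 0))) => [|c _].
      by rewrite big_split /= !delta_sum.
    rewrite /v im jm; case: eqP => [ci|_]; case: eqP => [cj|_] /=; try ring.
    by case/eqP: nij; apply: val_inj; rewrite /= -ci -cj.
  rewrite (eq_bigr (fun c : 'I_m => t ^+ 2 - 2 * t * (if (c : nat) == j then 1 else 0) +
                                    (if (c : nat) == j then 1 else 0))) => [|c _].
    rewrite big_split sumrB /= sumr_const card_ord -mulr_sumr !delta_sum // mulr1.
    by rewrite -[t ^+ 2 *+ m]mulr_natl; lra.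
  by rewrite /v ltnNge im jm ltn_ord /=; case: eqP => _; ring.
exists V => i j nij; case: (ltnP j m) => jm; first exact: key.
have jm' : (j : nat) = m by apply/eqP; rewrite eqn_leq jm -ltnS -nm ltn_ord.
rewrite sqnormBC key 1?eq_sym // ltn_neqAle -ltnS -nm ltn_ord andbT -jm'.
exact: nij.
Qed.

Lemma exists_regular_simplex (d n : nat) (r : R) :
  (2 <= n)%N -> (n <= d.+1)%N -> 0 < r ->
  exists Y : 'I_n -> 'rV[R]_d, regular_simplex Y /\ smallest_circumsphere r Y.
Proof.
move=> n2 nd r0; have [V V2] := exists_equidistant n2 nd.
have n0 : (0 < n)%N by apply: ltnW.
pose g := centroid V; pose K := sqnorm (V (Ordinal n0) - g).
have gV := sqnorm_sub_centroid_equidistant V2.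
have nz : 2 * n%:R != 0 :> R by rewrite mulf_neq0 // pnatr_eq0 -lt0n.
have VK i : sqnorm (V i - g) = K by apply: (mulfI nz); rewrite !gV.
have K0 : 0 < K.
  have : 0 < 2 * n%:R * K :> R.
    by rewrite gV // mulr_gt0 // ltr0n -ltnS prednK.
  by rewrite pmulr_rgt0 // mulr_gt0 // ltr0n.
pose a := r / Num.sqrt K; pose Y i := a *: (V i - g).
have a0 : a != 0 by rewrite mulf_neq0 ?invr_eq0 ?gt_eqF ?sqrtr_gt0.
have Y2 i j : i != j -> sqnorm (Y i - Y j) = a ^+ 2 * 2.
  by move=> nij; rewrite -scalerBr opprB addrA subrK sqnormZ V2.
exists Y; split; [split|].
- by apply: (equidistant_affinely_independent Y2); rewrite mulf_neq0 ?sqrf_eq0 ?pnatr_eq0.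
- by move=> i j k l nij nkl; rewrite /edist /enorm -!/(sqnorm _) !Y2.
- apply: (smallest_circumsphere_centered n0) => [k|i].
    rewrite (eq_bigr (fun i => a * (V i - g) ord0 k)) => [|i _]; last by rewrite mxE.
    by rewrite -mulr_sumr sum_sub_centroid // mulr0.
  rewrite /enorm -/(sqnorm _) sqnormZ VK expr_div_n sqr_sqrtr ?ltW // divfK ?gt_eqF //.
  by rewrite sqrtr_sqr gtr0_norm.
Qed.

End Construction.

Section MinimumSpanningTree.
Variables (R : realType) (n d : nat).
Implicit Types (X : 'I_n -> 'rV[R]_d) (G : {set 'I_n * 'I_n}).

Lemma mst_length_le X G : spanning_tree G -> (mst_length X <= (graph_length X G)%:E)%E.
Proof. by move=> tG; apply: bigmin_le_cond; apply/asboolP. Qed.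

Lemma le_mst_length X (a : R) :
  (forall G, spanning_tree G -> a <= graph_length X G) -> (a%:E <= mst_length X)%E.
Proof.
move=> aG; apply/bigmin_geP; split=> [|G /asboolP tG]; first exact: leey.
by rewrite lee_fin aG.
Qed.

Lemma star_length X k : graph_length X (star k) = \sum_j edist (X k) (X j).
Proof.
pose f i j := edist (X i) (X j).
pose up (j : 'I_n) := if (k < j)%N then f k j else 0.
pose down (j : 'I_n) := if (j < k)%N then f k j else 0.
have split_pair i j : (if ((i, j) \in star k) && (i < j)%N then f i j else 0) =
    (if i == k then up j else 0) + (if j == k then down i else 0).
  rewrite inE /up /down /f /=; case: (eqVneq i k) => [->|nik]; case: (eqVneq j k) => [->|njk] /=.
  - by rewrite ltnn !addr0.
  - by rewrite addr0.
  - by rewrite add0r edistC.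
  - by rewrite addr0.
rewrite /graph_length big_mkcond /= (eq_bigr (fun p => (if p.1 == k then up p.2 else 0) +
  (if p.2 == k then down p.1 else 0))) => [|[i j] _]; last exact: split_pair.
rewrite -(pair_bigA _ (fun i j =>
  (if i == k then up j else 0) + (if j == k then down i else 0))) /=.
under eq_bigr do rewrite big_split /=.
rewrite big_split /= exchange_big /=.
under eq_bigr do rewrite -big_mkcond big_pred1_eq.
under [X in _ + X]eq_bigr do rewrite -big_mkcond big_pred1_eq.
rewrite -big_split /=; apply: eq_bigr => j _; rewrite /up /down.
case: ltngtP => [_|_|/val_inj <-]; rewrite ?addr0 ?add0r //.
by rewrite edistxx.
Qed.

Lemma equidistant_mst_length_ge X (s : R) : 0 <= s ->
  (forall i j, i != j -> edist (X i) (X j) = s) -> ((n.-1%:R * s)%:E <= mst_length X)%E.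
Proof.
move=> s0 Xs; apply: le_mst_length => G [simG [connG _]].
rewrite /graph_length (eq_bigr (fun _ => s)) => [|p /andP [_ lt12]]; last first.
  by apply: Xs; rewrite neq_ltn lt12.
rewrite sumr_const -[X in _ <= X]mulr_natl ler_wpM2r // ler_nat.
apply: leq_trans (connected_edges_ge simG connG) _.
by rewrite (eq_card (B := [pred p | (p \in G) && (p.1 < p.2)%N])) // => p; rewrite inE.
Qed.

Lemma star_sum_sqr_le X :
  \sum_k (\sum_j edist (X k) (X j)) ^+ 2 <= n.-1%:R * (2 * n%:R * \sum_k sqnorm (X k)).
Proof.
apply: le_trans (ler_wpM2l (ler0n _ _) (sum_pairwise_sqnorm_le X)).
rewrite mulr_sumr; apply: ler_sum => k _.
rewrite (bigD1 k) //= edistxx add0r; apply: le_trans (sqr_sum_le _ _) _.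
rewrite cardC1 card_ord ler_wpM2l // [X in _ <= X](bigD1 k) //= subrr sqnorm0 add0r.
by under eq_bigr do rewrite edist_sqr sqnormBC.
Qed.

Lemma exists_short_star X (r : R) : (0 < n)%N -> (forall i, enorm (X i) <= r) ->
  exists k, (\sum_j edist (X k) (X j)) ^+ 2 <= n.-1%:R * (2 * n%:R * r ^+ 2).
Proof.
move=> n0 Xr; pose L k := \sum_j edist (X k) (X j).
have [k] := exists_le_mean (Ordinal n0) (fun k => L k ^+ 2); rewrite card_ord => Lk.
exists k.
have X2 : \sum_j sqnorm (X j) <= n%:R * r ^+ 2.
  have Xj j : sqnorm (X j) <= r ^+ 2.
    by rewrite -enorm_sqr ler_sqr ?nnegrE ?enorm_ge0 // (le_trans (enorm_ge0 (X j))).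
  by apply: le_trans (ler_sum _ (fun j _ => Xj j)) _; rewrite sumr_const card_ord mulr_natl.
rewrite -(@ler_pM2l _ n%:R) ?ltr0n //; apply: le_trans Lk _.
apply: le_trans (star_sum_sqr_le X) _.
suff -> : n%:R * (n.-1%:R * (2 * n%:R * r ^+ 2)) = n.-1%:R * (2 * n%:R * (n%:R * r ^+ 2)).
  by rewrite ler_wpM2l ?ler0n // ler_wpM2l ?mulr_ge0 ?ler0n.
by ring.
Qed.

End MinimumSpanningTree.

Lemma mst_length_le_regular_simplex (R : realType) (d n : nat) (r : R)
    (Y X : 'I_n -> 'rV[R]_d) :
  (2 <= n)%N -> regular_simplex Y -> smallest_circumsphere r Y ->
  (forall i, enorm (X i) <= r) -> (mst_length X <= mst_length Y)%E.
Proof.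
move=> n2 [_ Yreg] Ysph Xr; have n0 : (0 < n)%N by apply: ltnW.
pose i0 : 'I_n := Ordinal n0; pose i1 : 'I_n := Ordinal n2.
set s := edist (Y i0) (Y i1).
have Ys i j : i != j -> edist (Y i) (Y j) = s by move=> nij; apply: Yreg.
have Ys2 i j : i != j -> sqnorm (Y i - Y j) = s ^+ 2 by move=> nij; rewrite -edist_sqr Ys.
have rs := sqr_circumradius_le Ys2 n0 Ysph.
have s0 : 0 <= s by apply: enorm_ge0.
apply: le_trans (equidistant_mst_length_ge s0 Ys).
have [k Lk] := exists_short_star n0 Xr.
apply: le_trans (mst_length_le X (star_spanning_tree k)) _; rewrite lee_fin star_length.
rewrite -ler_sqr ?nnegrE ?sumr_ge0 ?mulr_ge0 ?ler0n // => [|j _]; last exact: enorm_ge0.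
apply: le_trans Lk _; rewrite exprMn [n.-1%:R ^+ 2]expr2 -[X in _ <= X]mulrA.
by apply: ler_wpM2l rs.
Qed.

Theorem theorem1 (R : realType) (d n : nat) (r : R) :
  (1 <= d)%N -> (2 <= n)%N -> (n <= d.+1)%N -> 0 < r ->
  (exists Y : 'I_n -> 'rV[R]_d, regular_simplex Y /\ smallest_circumsphere r Y) /\
  (forall Y : 'I_n -> 'rV[R]_d, regular_simplex Y -> smallest_circumsphere r Y ->
     forall X : 'I_n -> 'rV[R]_d, injective X -> (forall i, enorm (X i) <= r) ->
       (mst_length X <= mst_length Y)%E).
Proof.
move=> _ n2 nd r0; split; first exact: exists_regular_simplex.
by move=> Y Yreg Ysph X _; apply: mst_length_le_regular_simplex.
Qed.
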